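(* For every integer $F\ge12$, $s(F,4,3)=4F-30$.
   Context: A placement delivery array $S$-PDA$(F,K,Z)$ is an $F\times K$ array $R=(r_{j,k})$, $1\le j\le F$, $1\le k\le K$, over a finite set $S$ such that: (1) each cell is either empty or contains an element of $S$; (2) each column contains exactly $Z$ empty cells; (3) each element of $S$ occurs at most once in each row and at most once in each column; (4) if two distinct nonempty cells satisfy $r_{j_1,k_1}=r_{j_2,k_2}=t\in S$, then the cells $r_{j_1,k_2}$ and $r_{j_2,k_1}$ are empty. For integers $F,K\ge1$, $0\le Z\le F$, define $s(F,K,Z)=\min\{|S| : \text{there exists an } S\text{-PDA}(F,K,Z)\}$. *)

From mathcomp Require Import all_boot.
Set Implicit Arguments. Unset Strict Implicit. Unset Printing Implicit Defensive.

(* A placement delivery array S-PDA(F,K,Z): an F x K array whose cells are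
   either empty (None) or contain an element of the finite set S (Some t). *)
Definition is_PDA (S : finType) (F K Z : nat) (R : 'I_F -> 'I_K -> option S) : Prop :=
  (forall k : 'I_K, #|[set j : 'I_F | R j k == None]| = Z) /\
  (forall (j : 'I_F) (k1 k2 : 'I_K) (t : S),
      R j k1 = Some t -> R j k2 = Some t -> k1 = k2) /\
  (forall (j1 j2 : 'I_F) (k : 'I_K) (t : S),
      R j1 k = Some t -> R j2 k = Some t -> j1 = j2) /\
  (forall (j1 j2 : 'I_F) (k1 k2 : 'I_K) (t : S),
      (j1, k1) <> (j2, k2) -> R j1 k1 = Some t -> R j2 k2 = Some t ->
      R j1 k2 = None /\ R j2 k1 = None).

Definition PDA_exists (F K Z n : nat) : Prop :=
  exists R : 'I_F -> 'I_K -> option 'I_n, is_PDA Z R.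

(* s(F,K,Z) = n, i.e. n is the minimum |S| over all S-PDA(F,K,Z). *)
Definition s_is (F K Z n : nat) : Prop :=
  PDA_exists F K Z n /\ forall m, PDA_exists F K Z m -> n <= m.

From mathcomp Require Import all_boot zify.
Set Implicit Arguments. Unset Strict Implicit. Unset Printing Implicit Defensive.

(* Lower bound: give a cell holding the symbol t the weight floor(12/g(t)),
   where g(t) is the number of occurrences of t, so that every symbol carries
   total weight at most 12.  In a row with n empty cells each symbol of the row
   occurs at most n+1 times, since its other occurrences lie in distinct columns
   that are empty in this row; so the row carries weight at least
   (4-n) floor(12/(n+1)) >= 48 - 30n.  There are 12 empty cells in all, hence
   12|S| >= 48F - 360.
   Upper bound: the 12 x 4 array on 18 symbols built from the 2-subsets of the
   columns, padded with F - 12 rows of fresh symbols. *)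

Section Relabel.
Variables (F K Z : nat) (S T : finType) (f : S -> T).
Hypothesis f_inj : injective f.

Lemma omap_Some_inj (x y : option S) t :
  omap f x = Some t -> omap f y = Some t -> exists s, x = Some s /\ y = Some s.
Proof.
case: x => [s|] //; case: y => [s'|] //= [<-] [/f_inj ->].
by exists s.
Qed.

Lemma is_PDA_omap (R : 'I_F -> 'I_K -> option S) :
  is_PDA Z R -> is_PDA Z (fun j k => omap f (R j k)).
Proof.
case=> [Hnone [Hrow [Hcol H4]]]; split; [|split; [|split]].
- move=> k; rewrite -(Hnone k); apply: eq_card => j.
  by rewrite !inE; case: (R j k).
- by move=> j k1 k2 t /omap_Some_inj h /h [s [e1 e2]]; apply: Hrow e1 e2.
- by move=> j1 j2 k t /omap_Some_inj h /h [s [e1 e2]]; apply: Hcol e1 e2.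
- move=> j1 j2 k1 k2 t ne /omap_Some_inj h /h [s [e1 e2]].
  by case: (H4 _ _ _ _ _ ne e1 e2) => /= -> ->.
Qed.

End Relabel.

Lemma PDA_exists_card F K Z (S : finType) (R : 'I_F -> 'I_K -> option S) :
  is_PDA Z R -> PDA_exists F K Z #|S|.
Proof.
by move=> HR; exists (fun j k => omap enum_rank (R j k)); apply: is_PDA_omap HR;
  apply: enum_rank_inj.
Qed.

Lemma set2_eq (T : finType) (a b c d : T) :
  [set a; b] = [set c; d] -> (a = c /\ b = d) \/ (a = d /\ b = c).
Proof.
move=> E.
have : [/\ a \in [set c; d], b \in [set c; d],
          c \in [set a; b] & d \in [set a; b]].
  by rewrite -E set21 set22 E set21 set22.
by case=> /set2P[] ? /set2P[] ? /set2P[] ? /set2P[] ?; subst; by [left|right].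
Qed.

Section PairPDA.
Variables K q : nat.

Definition two_subset := {A : {set 'I_K} | #|A| == 2}.

(* The Maddah-Ali--Niesen array with t = 1, each row repeated q times: row
   (a, b) is empty in column a and holds the symbol ({a, k}, b) in column k;
   [insub] fails exactly when k = a, as then {a, k} is a singleton. *)
Definition pair_cell (x : 'I_K * 'I_q) (k : 'I_K) : option (two_subset * 'I_q) :=
  omap (fun A => (A, x.2)) (insub [set x.1; k]).

Definition pair_PDA (j : 'I_#|{: 'I_K * 'I_q}|) (k : 'I_K) :=
  pair_cell (enum_val j) k.

Lemma pair_cell_None x k : (pair_cell x k == None) = (k == x.1).
Proof.
rewrite /pair_cell; case: insubP => [A|]; rewrite cards2 eqSS eqb1 eq_sym.
  by move=> /negbTE ->.
by move=> /negbNE ->.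
Qed.

Lemma pair_cell_Some x k A b : pair_cell x k = Some (A, b) ->
  [/\ val A = [set x.1; k], k != x.1 & b = x.2].
Proof.
move=> e; have : pair_cell x k != None by rewrite e.
rewrite pair_cell_None; move: e; rewrite /pair_cell.
by case: insubP => // A' _ <- [<- <-].
Qed.

Lemma is_PDA_pair : is_PDA q pair_PDA.
Proof.
have row_inj (j1 j2 : 'I_#|{: 'I_K * 'I_q}|) :
    (enum_val j1).1 = (enum_val j2).1 -> (enum_val j1).2 = (enum_val j2).2 ->
    j1 = j2.
  move=> e1 e2; apply: enum_val_inj.
  rewrite [enum_val j1]surjective_pairing [enum_val j2]surjective_pairing.
  by rewrite e1 e2.
split; [|split; [|split]].
- move=> k; rewrite -(card_imset _ (@enum_val_inj _ _)).
  have -> : enum_val @: [set j | pair_PDA j k == None] = setX [set k] setT.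
    apply/setP => x; rewrite -[x]enum_rankK (mem_imset _ _ (@enum_val_inj _ _)).
    by rewrite !inE /pair_PDA pair_cell_None andbT eq_sym.
  by rewrite cardsX cards1 cardsT card_ord mul1n.
- move=> j k1 k2 [A b] /pair_cell_Some[e1 n1 _] /pair_cell_Some[e2 _ _].
  case: (set2_eq (etrans (esym e1) e2)) => [[_ //]|[_ e]].
  by rewrite e eqxx in n1.
- move=> j1 j2 k [A b] /pair_cell_Some[e1 n1 b1] /pair_cell_Some[e2 _ b2].
  case: (set2_eq (etrans (esym e1) e2)) => [[a12 _]|[e _]]; last first.
    by rewrite e eqxx in n1.
  exact: row_inj _ _ a12 (etrans (esym b1) b2).
- move=> j1 j2 k1 k2 [A b] ne /pair_cell_Some[e1 _ b1] /pair_cell_Some[e2 _ b2].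
  case: (set2_eq (etrans (esym e1) e2)) => [[a12 k12]|[ak1 ak2]].
    by case: ne; rewrite k12 (row_inj _ _ a12 (etrans (esym b1) b2)).
  by split; apply/eqP; rewrite /pair_PDA pair_cell_None ?ak1 ?ak2.
Qed.

Lemma PDA_exists_pair : PDA_exists (K * q) K q ('C(K, 2) * q).
Proof.
have := PDA_exists_card is_PDA_pair.
rewrite !card_prod card_sig !card_ord.
suff -> : #|[pred A : {set 'I_K} | #|A| == 2]| = 'C(K, 2) by [].
by rewrite -cardsE card_draws card_ord.
Qed.

End PairPDA.

Section FreshRows.
Variables (F K Z d : nat) (S : finType) (R : 'I_F -> 'I_K -> option S).

Definition append_fresh_rows (j : 'I_(F + d)) (k : 'I_K) :
    option (S + 'I_d * 'I_K) :=
  match split j with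
  | inl j0 => omap inl (R j0 k)
  | inr i => Some (inr (i, k))
  end.

Local Notation R' := append_fresh_rows.

Lemma append_fresh_rowsL j0 k : R' (lshift d j0) k = omap inl (R j0 k).
Proof. by rewrite /R' (unsplitK (inl _ j0)). Qed.

Lemma append_fresh_rowsR i k : R' (rshift F i) k = Some (inr (i, k)).
Proof. by rewrite /R' (unsplitK (inr _ i)). Qed.

Lemma append_fresh_rows_Some j k t : R' j k = Some t ->
  match t with
  | inl s => exists2 j0, j = lshift d j0 & R j0 k = Some s
  | inr (i, k') => j = rshift F i /\ k = k'
  end.
Proof.
rewrite -(splitK j); case: (split j) => [j0|i] /=.
  by rewrite append_fresh_rowsL; case E: (R j0 k) => [s|] //= [<-]; exists j0.
by rewrite append_fresh_rowsR => -[<-].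
Qed.

Lemma is_PDA_append_fresh_rows : is_PDA Z R -> is_PDA Z R'.
Proof.
case=> [Hnone [Hrow [Hcol H4]]]; split; [|split; [|split]].
- move=> k; rewrite -(Hnone k) -(card_imset _ (@lshift_inj F d)).
  apply: eq_card => j; rewrite inE -(splitK j); case: (split j) => [j0|i] /=.
    rewrite (mem_imset _ _ (@lshift_inj F d)) inE append_fresh_rowsL.
    by case: (R j0 k).
  rewrite append_fresh_rowsR; apply/esym/imsetP => -[j0 _] /(congr1 val) /=.
  by have := ltn_ord j0; lia.
- move=> j k1 k2 [s|[i k]] /append_fresh_rows_Some + /append_fresh_rows_Some.
    by move=> [j0 -> e1] [j0' /lshift_inj <- e2]; apply: Hrow e1 e2.
  by move=> [_ <-] [_ <-].
- move=> j1 j2 k [s|[i k']] /append_fresh_rows_Some + /append_fresh_rows_Some.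
    by move=> [j0 -> e1] [j0' -> e2]; rewrite (Hcol _ _ _ _ e1 e2).
  by move=> [-> _] [-> _].
- move=> j1 j2 k1 k2 [s|[i k]] ne
    /append_fresh_rows_Some + /append_fresh_rows_Some.
    move=> [j01 def_j1 e1] [j02 def_j2 e2]; subst j1 j2.
    rewrite !append_fresh_rowsL.
    have ne0 : (j01, k1) <> (j02, k2) by move=> [e e']; apply: ne; rewrite e e'.
    by case: (H4 _ _ _ _ _ ne0 e1 e2) => -> ->.
  by move=> [e1 e1'] [e2 e2']; case: ne; rewrite e1 e2 e1' e2'.
Qed.

End FreshRows.

Lemma PDA_exists_add_fresh_rows F K Z n d :
  PDA_exists F K Z n -> PDA_exists (F + d) K Z (n + d * K).
Proof.
case=> R /(is_PDA_append_fresh_rows d)/PDA_exists_card.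
by rewrite card_sum card_prod !card_ord.
Qed.

Section Counting.
Variables (F K Z : nat) (S : finType) (R : 'I_F -> 'I_K -> option S).
Hypothesis HR : is_PDA Z R.

Definition symbol_count (t : S) := #|[set c : 'I_F * 'I_K | R c.1 c.2 == Some t]|.
Definition row_empty_count (j : 'I_F) := #|[set k | R j k == None]|.

Lemma symbol_count_gt0 j k t : R j k = Some t -> 0 < symbol_count t.
Proof. by move=> e; apply/card_gt0P; exists (j, k); rewrite inE /= e. Qed.

Lemma symbol_count_le_row j k t :
  R j k = Some t -> symbol_count t <= (row_empty_count j).+1.
Proof.
case: HR => _ [_ [Hcol H4]] e.
pose occ := [set c : 'I_F * 'I_K | R c.1 c.2 == Some t].
have col_inj : {in occ &, injective snd}.
  move=> [j1 k1] [j2 k2]; rewrite !inE /= => /eqP e1 /eqP e2 ek.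
  by rewrite -ek in e2 *; rewrite (Hcol _ _ _ _ e1 e2).
rewrite /symbol_count -/occ -(card_in_imset col_inj).
apply: leq_trans (_ : #|k |: [set k' | R j k' == None]| <= _); last first.
  by rewrite cardsU1 /row_empty_count; case: (k \notin _).
apply/subset_leq_card/subsetP => _ /imsetP [[j2 k2] + ->] /=.
rewrite !inE /= => /eqP e2; case: (eqVneq k2 k) => //= ne.
have [|-> _] // := H4 j j2 k k2 t _ e e2.
by case=> _ ek; rewrite ek eqxx in ne.
Qed.

Lemma sum_row_empty_count : \sum_j row_empty_count j = K * Z.
Proof.
case: HR => Hnone _.
under eq_bigr => j _ do rewrite /row_empty_count -sum1dep_card big_mkcond.
rewrite exchange_big /=.
under eq_bigr => k _ do rewrite -big_mkcond sum1dep_card Hnone.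
by rewrite sum_nat_const card_ord.
Qed.

Lemma sum_symbol_count_weight (w : S -> nat) :
  \sum_t symbol_count t * w t =
  \sum_j \sum_k (if R j k is Some t then w t else 0).
Proof.
have count_weight t : symbol_count t * w t =
    \sum_(c : 'I_F * 'I_K) (if R c.1 c.2 == Some t then w t else 0).
  rewrite /symbol_count -sum1dep_card big_distrl big_mkcond.
  by apply: eq_bigr => c _; case: (_ == _) => /=; rewrite ?mul1n.
under eq_bigr => t _ do rewrite count_weight.
rewrite exchange_big [RHS]pair_big /=; apply: eq_bigr => -[j k] _ /=.
case: (R j k) => [s|]; last by rewrite big1.
rewrite (bigD1 s) //= eqxx big1 ?addn0 // => t ne.
by case: eqP => // -[e]; rewrite e eqxx in ne.
Qed.

Lemma row_weight_ge L j :
  (K - row_empty_count j) * (L %/ (row_empty_count j).+1) <=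
  \sum_k (if R j k is Some t then L %/ symbol_count t else 0).
Proof.
set A := [set k | R j k == None].
rewrite -[K in K - _](card_ord K) -(cardsC A) addKn -sum_nat_const big_mkcond.
apply: leq_sum => k _; rewrite !inE; case E: (R j k) => [t|] //=.
exact: leq_div2l (symbol_count_gt0 E) (symbol_count_le_row E).
Qed.

Lemma PDA_weight_bound L c :
  (forall n, n <= K -> K * L <= (K - n) * (L %/ n.+1) + c * n) ->
  K * L * F <= L * #|S| + c * (K * Z).
Proof.
move=> hLc.
have row_bound j : K * L <=
    \sum_k (if R j k is Some t then L %/ symbol_count t else 0) +
    c * row_empty_count j.
  apply: leq_trans (hLc (row_empty_count j) _) _.
    by rewrite -[X in _ <= X]card_ord max_card.
  by rewrite leq_add2r row_weight_ge.
have symbol_bound : \sum_t symbol_count t * (L %/ symbol_count t) <= L * #|S|.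
  rewrite -sum1_card big_distrr; apply: leq_sum => t _.
  by rewrite /= muln1 mulnC leq_divM.
have sum_rows :
    K * L * F <= \sum_t symbol_count t * (L %/ symbol_count t) + c * (K * Z).
  rewrite sum_symbol_count_weight -sum_row_empty_count big_distrr -big_split /=.
  rewrite -[F in _ * F]card_ord mulnC -sum_nat_const.
  by apply: leq_sum => j _; apply: row_bound.
by apply: leq_trans sum_rows _; rewrite leq_add2r.
Qed.

End Counting.

Lemma PDA_exists_4_3 F : 12 <= F -> PDA_exists F 4 3 (4 * F - 30).
Proof.
move=> hF; rewrite -(subnKC hF).
have -> : 4 * (12 + (F - 12)) - 30 = 'C(4, 2) * 3 + (F - 12) * 4.
  by rewrite (_ : 'C(4, 2) = 6) //; lia.
exact: PDA_exists_add_fresh_rows (PDA_exists_pair 4 3).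
Qed.

Lemma PDA_lower_4_3 F m : PDA_exists F 4 3 m -> 4 * F - 30 <= m.
Proof.
have weights n : n <= 4 -> 4 * 12 <= (4 - n) * (12 %/ n.+1) + 30 * n.
  by case: n => [|[|[|[|[|]]]]].
case=> R /PDA_weight_bound /(_ 12 30 weights).
by rewrite card_ord; lia.
Qed.

Theorem mainTheorem17 (F : nat) : 12 <= F -> s_is F 4 3 (4 * F - 30).
Proof.
move=> hF; split; first exact: PDA_exists_4_3.
by move=> m /PDA_lower_4_3.
Qed.
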